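(* Let $U\in C([0,1])\cap C^1((0,1])\cap C^2((0,1))$ satisfy $U''>0$ on $(0,1)$, $\lim_{h\downarrow0}U'(h)=-\infty$, and $r\mapsto rU''(r)$ non-decreasing on $(0,1)$. Let $\widetilde a,a>0$ with $\widetilde a<a\le1$. Suppose that for some integer $K\ge3$ there exists $\kappa>0$ such that $D_U(\widetilde a z,\widetilde a w)=\kappa D_U(az,aw)$ for all $z,w\in\mathcal{P}_K$. Then there exist $\mu_0,\mu_1\in\mathbb{R}$ and $\lambda>0$ such that $U(r)=\lambda r\log r+\mu_1r+\mu_0$ for all $r\in(0,a]$.
   Context: $\mathcal{P}_K=\{z\in\mathbb{R}^K: z_k\ge0,\sum_kz_k=1\}$. $d_U(r,r_0)=U(r)-U(r_0)-(r-r_0)U'(r_0)$ for $r\in[0,1]$, $r_0\in(0,1]$, extended by $d_U(r,0)=\lim_{r_0\downarrow0}d_U(r,r_0)\in[0,\infty]$. For $b\in(0,1]$ and $z,w\in\mathcal{P}_K$, $D_U(bz,bw)=\sum_k d_U(bz_k,bw_k)$. *)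

From Stdlib Require Import Reals.
From Coquelicot Require Import Coquelicot.
Open Scope R_scope.

(* The probability simplex P_K, vectors represented as z : nat -> R,
   with coordinates z 0, ..., z (K-1). *)
Definition simplex (K : nat) (z : nat -> R) : Prop :=
  (forall k, (k < K)%nat -> 0 <= z k) /\ sum_n_m z 0 (K - 1) = 1.

(* d_U(r, r0) with Up playing the role of U'.  For r0 > 0 it is the finite
   Bregman-type value; for r0 = 0 it is the (right) limit r0 -> 0+,
   taken along the sequence 1/(n+1) (which equals the right limit whenever
   the latter exists in [0, +oo]). *)
Definition dU (U Up : R -> R) (r r0 : R) : Rbar :=
  if Rlt_dec 0 r0 then Finite (U r - U r0 - (r - r0) * Up r0)
  else Lim_seq (fun n => U r - U (/ INR (S n)) - (r - / INR (S n)) * Up (/ INR (S n))).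

Fixpoint Rbar_sum (f : nat -> Rbar) (K : nat) : Rbar :=
  match K with
  | O => Finite 0
  | S K' => Rbar_plus (Rbar_sum f K') (f K')
  end.

Definition DU (U Up : R -> R) (K : nat) (b : R) (z w : nat -> R) : Rbar :=
  Rbar_sum (fun k => dU U Up (b * z k) (b * w k)) K.

From Stdlib Require Import Reals Lra Lia Psatz.
From Coquelicot Require Import Coquelicot.
Open Scope R_scope.

(* Move mass t between two coordinates x, y of the simplex, keeping the others fixed:
   differentiating the scaling identity twice in t at t = 0 gives
   a'^2 (U''(a'x) + U''(a'y)) = kappa a^2 (U''(ax) + U''(ay)) whenever x, y > 0, x + y < 1,
   hence a'^2 U''(a'x) = kappa a^2 U''(ax).  For g(s) = s U''(s) this reads g(qs) = c g(s)
   on (0, a), with q = a'/a < 1 and c = kappa a / a'.  Monotonicity of g gives c <= 1; if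
   c < 1, the increments of U' along s, qs, q^2 s, ... are bounded by a geometric series,
   so U' stays bounded below near 0, contradicting U'(0+) = -oo.  Hence g(qs) = g(s), and a
   monotone function invariant under s |-> qs is constant: U'' = lambda / s on (0, a),
   which integrates to the logarithmic profile; continuity extends it to r = a. *)

Definition bregman (U Up : R -> R) (r r0 : R) : R := U r - U r0 - (r - r0) * Up r0.

Lemma dU_pos (U Up : R -> R) (r r0 : R) :
  0 < r0 -> dU U Up r r0 = Finite (bregman U Up r r0).
Proof. intros Hr0; unfold dU; destruct (Rlt_dec 0 r0); [reflexivity | lra]. Qed.

Lemma Rbar_sum_two (f : nat -> Rbar) (K : nat) :
  (2 <= K)%nat -> (forall k, (2 <= k < K)%nat -> f k = Finite 0) ->
  Rbar_sum f K = Rbar_plus (f 0%nat) (f 1%nat).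
Proof.
  intros HK Hf; induction K as [|K IH]; [lia|].
  destruct (Nat.eq_dec K 1) as [->|HK1]; simpl.
  - now rewrite Rbar_plus_0_l.
  - rewrite Hf, Rbar_plus_0_r by lia.
    apply IH; [lia | intros k Hk; apply Hf; lia].
Qed.

Definition transfer (x y t c : R) (k : nat) : R :=
  match k with O => x + t | 1%nat => y - t | _ => c end.

Lemma sum_n_m_transfer (x y t c : R) (n : nat) :
  (1 <= n)%nat -> sum_n_m (transfer x y t c) 0 n = x + y + INR (n - 1) * c.
Proof.
  intros Hn; induction n as [|n IH]; [lia|].
  destruct (Nat.eq_dec n 0) as [->|Hn0].
  - rewrite sum_n_Sm, sum_n_n by lia; simpl; unfold plus; simpl; ring.
  - rewrite sum_n_Sm, IH by lia.
    replace (S n - 1)%nat with (S (n - 1)) by lia.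
    destruct n as [|n]; [lia|]; rewrite S_INR; unfold plus; simpl; ring.
Qed.

Lemma transfer_simplex (K : nat) (x y t : R) :
  (3 <= K)%nat -> 0 <= x + t -> 0 <= y - t -> x + y <= 1 ->
  simplex K (transfer x y t ((1 - x - y) / (INR K - 2))).
Proof.
  intros HK Hx Hy Hxy.
  assert (HK3 : 3 <= INR K) by (replace 3 with (INR 3) by (simpl; ring); apply le_INR; lia).
  split.
  - intros [|[|k]] _; simpl; try lra; apply Rdiv_le_0_compat; lra.
  - rewrite sum_n_m_transfer by lia.
    replace (K - 1 - 1)%nat with (K - 2)%nat by lia.
    rewrite minus_INR by lia; simpl; field; lra.
Qed.

Definition transfer_cost (U Up : R -> R) (b x y t : R) : R :=
  bregman U Up (b * (x + t)) (b * x) + bregman U Up (b * (y - t)) (b * y).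

Lemma DU_transfer (U Up : R -> R) (K : nat) (b x y t c : R) :
  (2 <= K)%nat -> 0 < b * x -> 0 < b * y -> 0 < b * c ->
  DU U Up K b (transfer x y t c) (transfer x y 0 c) = Finite (transfer_cost U Up b x y t).
Proof.
  intros HK Hx Hy Hc; unfold DU.
  rewrite Rbar_sum_two; [| exact HK |].
  - simpl; rewrite Rplus_0_r, Rminus_0_r, !dU_pos by lra; reflexivity.
  - intros [|[|k]] Hk; try lia.
    simpl; rewrite dU_pos by lra; unfold bregman; f_equal; ring.
Qed.

Lemma is_derive_locally_zero (f : R -> R) (l u t d : R) :
  (forall s, l < s < u -> f s = 0) -> l < t < u -> is_derive f t d -> d = 0.
Proof.
  intros Hf Ht Hd.
  assert (H0 : is_derive (fun _ => 0) t d).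
  { apply (is_derive_ext_loc f); [| exact Hd].
    apply (locally_interval _ t l u); simpl; try lra.
    intros s Hl Hu; apply Hf; lra. }
  apply is_derive_unique in H0; rewrite Derive_const in H0; auto.
Qed.

Lemma MVT_interval (f df : R -> R) (l u x y : R) :
  (forall t, l < t < u -> is_derive f t (df t)) -> l < x -> x <= y -> y < u ->
  exists c, x <= c <= y /\ f y - f x = df c * (y - x).
Proof.
  intros Hd Hx Hxy Hy.
  destruct (MVT_gen f x y df) as [c [Hc Heq]].
  - rewrite Rmin_left, Rmax_right by lra; intros t Ht; apply Hd; lra.
  - rewrite Rmin_left, Rmax_right by lra; intros t Ht.
    apply continuity_pt_filterlim, (ex_derive_continuous (K := R_AbsRing) (V := R_NormedModule)).
    exists (df t); apply Hd; lra.
  - rewrite Rmin_left, Rmax_right in Hc by lra; eauto.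
Qed.

Lemma is_derive_zero_const (f : R -> R) (l u x y : R) :
  (forall t, l < t < u -> is_derive f t 0) -> l < x < u -> l < y < u -> f x = f y.
Proof.
  intros Hd Hx Hy.
  destruct (Rle_dec x y) as [Hxy | Hxy];
    [ destruct (MVT_interval f (fun _ => 0) l u x y) as [c [_ Hc]]
    | destruct (MVT_interval f (fun _ => 0) l u y x) as [c [_ Hc]] ]; auto; lra.
Qed.

Lemma is_derive_minus_scal (f g : R -> R) (k x df dg : R) :
  is_derive f x df -> is_derive g x dg ->
  is_derive (fun s => f s - k * g s) x (df - k * dg).
Proof.
  intros Hf Hg.
  exact (is_derive_minus f (fun s => k * g s) x df (k * dg) Hf (is_derive_scal g x k dg Hg)).
Qed.

Lemma pair_sum_zero (H : R -> R) :
  (forall x y, 0 < x -> 0 < y -> x + y < 1 -> H x + H y = 0) ->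
  forall r, 0 < r < 1 -> H r = 0.
Proof.
  intros Hpair r Hr.
  assert (Hsmall : forall s, 0 < s < 1 / 2 -> H s = 0)
    by (intros s Hs; specialize (Hpair s s ltac:(lra) ltac:(lra) ltac:(lra)); lra).
  destruct (Rlt_dec r (1 / 2)) as [Hr2 | Hr2]; [apply Hsmall; lra |].
  assert (Hs : H ((1 - r) / 2) = 0) by (apply Hsmall; lra).
  specialize (Hpair r ((1 - r) / 2) ltac:(lra) ltac:(lra) ltac:(lra)); lra.
Qed.

Lemma Rdiv_in_unit (x y : R) : 0 < x < y -> 0 < x / y < 1.
Proof.
  intros Hxy; split; [apply Rdiv_lt_0_compat; lra |].
  apply (Rmult_lt_reg_r y); [lra |].
  unfold Rdiv; rewrite Rmult_assoc, Rinv_l, Rmult_1_r by lra; lra.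
Qed.

Lemma pow_pos_le_1 (q : R) (n : nat) : 0 < q <= 1 -> 0 < q ^ n <= 1.
Proof. intros Hq; induction n as [|n IH]; simpl; nra. Qed.

Lemma geometric_below (q s t : R) : 0 < q < 1 -> 0 < s -> 0 < t -> exists n, q ^ n * t < s.
Proof.
  intros Hq Hs Ht.
  destruct (pow_lt_1_zero q ltac:(rewrite Rabs_pos_eq; lra) (s / t) ltac:(apply Rdiv_lt_0_compat; lra))
    as [n Hn].
  exists n; specialize (Hn n (le_n n)).
  rewrite Rabs_pos_eq in Hn by (apply pow_le; lra).
  apply (Rmult_lt_compat_r t) in Hn; [| exact Ht].
  unfold Rdiv in Hn; rewrite Rmult_assoc, Rinv_l, Rmult_1_r in Hn by lra; exact Hn.
Qed.

Section Regularity.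

Variables U Up Upp : R -> R.
Hypothesis HU1 : forall x, 0 < x < 1 -> is_derive U x (Up x).
Hypothesis HU2 : forall x, 0 < x < 1 -> is_derive Up x (Upp x).

Definition transfer_slope (b x y t : R) : R :=
  b * (Up (b * (x + t)) - Up (b * x)) - b * (Up (b * (y - t)) - Up (b * y)).

Lemma is_derive_transfer_cost (b x y t : R) :
  0 < b <= 1 -> 0 < x -> 0 < y -> 0 < x + t -> 0 < y - t -> x + y < 1 ->
  is_derive (transfer_cost U Up b x y) t (transfer_slope b x y t).
Proof.
  intros Hb Hx Hy Hxt Hyt Hxy; unfold transfer_cost, bregman, transfer_slope.
  assert (HU1' : forall r, 0 < r < 1 -> ex_derive U r) by (intros r Hr; exists (Up r); auto).
  auto_derive.
  - repeat split; apply HU1'; split; nra.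
  - rewrite !(is_derive_unique U _ (Up _)) by (apply HU1; split; nra).
    unfold Rminus; ring.
Qed.

Lemma is_derive_transfer_slope (b x y : R) :
  0 < b <= 1 -> 0 < x -> 0 < y -> x + y < 1 ->
  is_derive (transfer_slope b x y) 0 (b ^ 2 * (Upp (b * x) + Upp (b * y))).
Proof.
  intros Hb Hx Hy Hxy; unfold transfer_slope.
  assert (HU2' : forall r, 0 < r < 1 -> ex_derive Up r) by (intros r Hr; exists (Upp r); auto).
  auto_derive.
  - repeat split; apply HU2'; split; nra.
  - rewrite Ropp_0, !Rplus_0_r.
    rewrite !(is_derive_unique Up _ (Upp _)) by (apply HU2; split; nra); ring.
Qed.

Lemma second_variation (b1 b2 kappa x y : R) :
  0 < b1 <= 1 -> 0 < b2 <= 1 -> 0 < x -> 0 < y -> x + y < 1 ->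
  (forall t, - Rmin x y < t < Rmin x y ->
     transfer_cost U Up b1 x y t = kappa * transfer_cost U Up b2 x y t) ->
  b1 ^ 2 * (Upp (b1 * x) + Upp (b1 * y)) = kappa * (b2 ^ 2 * (Upp (b2 * x) + Upp (b2 * y))).
Proof.
  intros Hb1 Hb2 Hx Hy Hxy Hcost.
  set (m := Rmin x y) in *.
  assert (Hmx : m <= x) by apply Rmin_l. assert (Hmy : m <= y) by apply Rmin_r.
  assert (Hm : 0 < m) by (apply Rmin_pos; lra).
  assert (Hslope : forall t, - m < t < m ->
    transfer_slope b1 x y t - kappa * transfer_slope b2 x y t = 0).
  { intros t Ht.
    apply (is_derive_locally_zero
      (fun s => transfer_cost U Up b1 x y s - kappa * transfer_cost U Up b2 x y s) (- m) m t).
    - intros s Hs; rewrite Hcost by exact Hs; ring.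
    - exact Ht.
    - apply is_derive_minus_scal; apply is_derive_transfer_cost; auto; lra. }
  enough (H : b1 ^ 2 * (Upp (b1 * x) + Upp (b1 * y))
              - kappa * (b2 ^ 2 * (Upp (b2 * x) + Upp (b2 * y))) = 0) by lra.
  apply (is_derive_locally_zero _ (- m) m 0 _ Hslope); [lra |].
  apply is_derive_minus_scal; apply is_derive_transfer_slope; auto.
Qed.

Lemma scaling_balance (K : nat) (b1 b2 kappa x y : R) :
  (3 <= K)%nat -> 0 < b1 <= 1 -> 0 < b2 <= 1 ->
  (forall z w, simplex K z -> simplex K w ->
     DU U Up K b1 z w = Rbar_mult (Finite kappa) (DU U Up K b2 z w)) ->
  0 < x -> 0 < y -> x + y < 1 ->
  b1 ^ 2 * (Upp (b1 * x) + Upp (b1 * y)) = kappa * (b2 ^ 2 * (Upp (b2 * x) + Upp (b2 * y))).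
Proof.
  intros HK Hb1 Hb2 Hscale Hx Hy Hxy.
  apply second_variation; auto.
  intros t Ht.
  assert (Hmx : Rmin x y <= x) by apply Rmin_l. assert (Hmy : Rmin x y <= y) by apply Rmin_r.
  set (c := (1 - x - y) / (INR K - 2)).
  assert (Hc : 0 < c).
  { assert (3 <= INR K) by (replace 3 with (INR 3) by (simpl; ring); apply le_INR; lia).
    apply Rdiv_lt_0_compat; lra. }
  assert (Hid := Hscale (transfer x y t c) (transfer x y 0 c)
    (transfer_simplex K x y t HK ltac:(lra) ltac:(lra) ltac:(lra))
    (transfer_simplex K x y 0 HK ltac:(lra) ltac:(lra) ltac:(lra))).
  rewrite !DU_transfer in Hid by (lia || nra).
  injection Hid; auto.
Qed.

Lemma scaling_curvature (K : nat) (b1 b2 kappa : R) :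
  (3 <= K)%nat -> 0 < b1 <= 1 -> 0 < b2 <= 1 ->
  (forall z w, simplex K z -> simplex K w ->
     DU U Up K b1 z w = Rbar_mult (Finite kappa) (DU U Up K b2 z w)) ->
  forall s, 0 < s < b2 ->
    b1 / b2 * s * Upp (b1 / b2 * s) = kappa * b2 / b1 * (s * Upp s).
Proof.
  intros HK Hb1 Hb2 Hscale s Hs.
  set (H := fun r => b1 ^ 2 * Upp (b1 * r) - kappa * (b2 ^ 2 * Upp (b2 * r))).
  assert (H0 : H (s / b2) = 0).
  { apply pair_sum_zero.
    - intros x y Hx Hy Hxy; unfold H.
      pose proof (scaling_balance K b1 b2 kappa x y HK Hb1 Hb2 Hscale Hx Hy Hxy); lra.
    - apply Rdiv_in_unit; lra. }
  unfold H in H0.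
  replace (b1 * (s / b2)) with (b1 / b2 * s) in H0 by (field; lra).
  replace (b2 * (s / b2)) with s in H0 by (field; lra).
  apply (Rmult_eq_reg_l (b1 * b2)); [| nra].
  replace (b1 * b2 * (b1 / b2 * s * Upp (b1 / b2 * s))) with (s * (b1 ^ 2 * Upp (b1 / b2 * s)))
    by (field; lra).
  replace (b1 ^ 2 * Upp (b1 / b2 * s)) with (kappa * (b2 ^ 2 * Upp s)) by lra.
  field; lra.
Qed.

Hypothesis HUpp_pos : forall x, 0 < x < 1 -> 0 < Upp x.
Hypothesis Hmono : forall r s, 0 < r -> r <= s -> s < 1 -> r * Upp r <= s * Upp s.

Lemma Up_increment_le (q s : R) :
  0 < q < 1 -> 0 < s < 1 -> Up s - Up (q * s) <= (1 - q) / q * (s * Upp s).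
Proof.
  intros Hq Hs.
  destruct (MVT_interval Up Upp 0 1 (q * s) s) as [xi [Hxi ->]]; auto; try nra.
  assert (Hxi_pos : 0 < xi) by nra.
  assert (Hg : xi * Upp xi <= s * Upp s) by (apply Hmono; lra).
  assert (HUxi : 0 < Upp xi) by (apply HUpp_pos; lra).
  apply (Rmult_le_reg_l q); [lra |].
  replace (q * ((1 - q) / q * (s * Upp s))) with ((1 - q) * (s * Upp s)) by (field; lra).
  apply Rle_trans with ((1 - q) * (xi * Upp xi)).
  - assert (Hqs : 0 <= ((1 - q) * Upp xi) * (xi - q * s))
      by (apply Rmult_le_pos; nra).
    nra.
  - apply Rmult_le_compat_l; lra.
Qed.

Lemma scaling_orbit (q c a : R) :
  0 < q < 1 -> (forall s, 0 < s < a -> q * s * Upp (q * s) = c * (s * Upp s)) ->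
  forall n s, 0 < s < a -> q ^ n * s * Upp (q ^ n * s) = c ^ n * (s * Upp s).
Proof.
  intros Hq Hscale n s Hs; induction n as [|n IH]; simpl.
  - rewrite !Rmult_1_l; reflexivity.
  - assert (Hqn := pow_pos_le_1 q n ltac:(lra)).
    rewrite !(Rmult_assoc q (q ^ n)), Hscale, IH by nra; ring.
Qed.

Hypothesis HUp0 : filterlim Up (at_right 0) (Rbar_locally m_infty).

Lemma Up_orbit_unbounded (q s L : R) : 0 < q < 1 -> 0 < s -> exists n, Up (q ^ n * s) < L.
Proof.
  intros Hq Hs.
  destruct (HUp0 (fun v => v < L) ltac:(exists L; auto)) as [d Hd].
  destruct (geometric_below q d s Hq (cond_pos d) Hs) as [n Hn].
  assert (Hqn := pow_pos_le_1 q n ltac:(lra)).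
  exists n; apply Hd; [| nra].
  change (Rabs (q ^ n * s - 0) < d); rewrite Rminus_0_r, Rabs_pos_eq; nra.
Qed.

Lemma Up_orbit_lower_bound (q c s : R) :
  0 < q < 1 -> 0 < c < 1 -> 0 < s < 1 ->
  (forall n, q ^ n * s * Upp (q ^ n * s) = c ^ n * (s * Upp s)) ->
  forall n, Up s - (1 - q) / q * (s * Upp s) / (1 - c) <= Up (q ^ n * s).
Proof.
  intros Hq Hc Hs Horbit.
  set (M := (1 - q) / q * (s * Upp s)).
  assert (HM : 0 <= M).
  { apply Rmult_le_pos; [apply Rdiv_le_0_compat; lra |].
    apply Rlt_le, Rmult_lt_0_compat; [lra | apply HUpp_pos; lra]. }
  assert (Hsum : forall n, Up s - M * (1 - c ^ n) / (1 - c) <= Up (q ^ n * s)).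
  { induction n as [|n IH]; simpl.
    - rewrite Rmult_1_l; unfold Rdiv; rewrite Rminus_diag, Rmult_0_r, Rmult_0_l; lra.
    - assert (Hqn := pow_pos_le_1 q n ltac:(lra)).
      assert (Hstep := Up_increment_le q (q ^ n * s) Hq ltac:(nra)).
      rewrite Horbit, <- Rmult_assoc in Hstep.
      replace (M * (1 - c * c ^ n) / (1 - c)) with (M * (1 - c ^ n) / (1 - c) + M * c ^ n)
        by (field; lra).
      unfold M in *; nra. }
  intros n; eapply Rle_trans; [| apply Hsum].
  assert (Hcn : 0 < c ^ n) by (apply pow_lt; lra).
  apply Rplus_le_compat_l, Ropp_le_contravar.
  unfold Rdiv; apply Rmult_le_compat_r; [apply Rlt_le, Rinv_0_lt_compat; lra | nra].
Qed.

Lemma scaling_ratio_eq_1 (q c a : R) :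
  0 < q < 1 -> 0 < c -> 0 < a <= 1 ->
  (forall s, 0 < s < a -> q * s * Upp (q * s) = c * (s * Upp s)) -> c = 1.
Proof.
  intros Hq Hc Ha Hscale.
  set (s := a / 2).
  assert (Hs : 0 < s < a) by (unfold s; lra).
  assert (Hgs : 0 < s * Upp s) by (apply Rmult_lt_0_compat; [lra | apply HUpp_pos; lra]).
  assert (Hc1 : c <= 1).
  { assert (Hqs : q * s * Upp (q * s) <= s * Upp s) by (apply Hmono; nra).
    rewrite Hscale in Hqs by exact Hs; nra. }
  destruct (Rlt_dec c 1) as [Hlt | Hge]; [exfalso | lra].
  set (B := Up s - (1 - q) / q * (s * Upp s) / (1 - c)).
  destruct (Up_orbit_unbounded q s B Hq ltac:(lra)) as [n Hn].
  assert (HB := Up_orbit_lower_bound q c s Hq ltac:(lra) ltac:(lra)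
    (fun n => scaling_orbit q c a Hq Hscale n s Hs) n).
  unfold B in Hn; lra.
Qed.

Lemma curvature_const (q a : R) :
  0 < q < 1 -> 0 < a <= 1 -> (forall s, 0 < s < a -> q * s * Upp (q * s) = s * Upp s) ->
  forall s t, 0 < s < a -> 0 < t < a -> t * Upp t = s * Upp s.
Proof.
  intros Hq Ha Hscale.
  assert (Hle : forall s t, 0 < s < a -> 0 < t < a -> t * Upp t <= s * Upp s).
  { intros s t Hs Ht.
    destruct (Rle_dec t s) as [Hts | Hts]; [apply Hmono; lra |].
    destruct (geometric_below q s t Hq ltac:(lra) ltac:(lra)) as [n Hn].
    assert (Hqn := pow_pos_le_1 q n ltac:(lra)).
    assert (Horbit := scaling_orbit q 1 a Hq ltac:(intros u Hu; rewrite Hscale; auto; ring) n t Ht).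
    rewrite pow1, Rmult_1_l in Horbit.
    rewrite <- Horbit; apply Hmono; nra. }
  intros s t Hs Ht; apply Rle_antisym; auto.
Qed.

Lemma log_profile (a lam : R) :
  0 < a <= 1 -> (forall s, 0 < s < a -> s * Upp s = lam) ->
  exists mu1 mu0, forall r, 0 < r < a -> U r = lam * r * ln r + mu1 * r + mu0.
Proof.
  intros Ha Hlam.
  set (V := fun r => Up r - lam * (ln r + 1)).
  assert (HV : forall r, 0 < r < a -> is_derive V r 0).
  { intros r Hr; unfold V; auto_derive.
    - split; [exists (Upp r); apply HU2; lra | split; [lra | auto]].
    - rewrite (is_derive_unique _ r (Upp r)) by (apply HU2; lra).
      rewrite <- (Hlam r Hr); field; lra. }
  set (mu1 := V (a / 2)).
  set (W := fun r => U r - lam * r * ln r - mu1 * r).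
  assert (HW : forall r, 0 < r < a -> is_derive W r 0).
  { intros r Hr; unfold W; auto_derive.
    - split; [exists (Up r); apply HU1; lra | split; [lra | auto]].
    - rewrite (is_derive_unique _ r (Up r)) by (apply HU1; lra).
      assert (HVr : V r = mu1) by (apply (is_derive_zero_const V 0 a); auto; lra).
      unfold V in HVr; replace (Up r) with (mu1 + lam * (ln r + 1)) by lra; field; lra. }
  exists mu1, (W (a / 2)); intros r Hr.
  assert (HWr : W r = W (a / 2)) by (apply (is_derive_zero_const W 0 a); auto; lra).
  unfold W in HWr at 1; lra.
Qed.

End Regularity.

Lemma at_left_le_within_unit (a : R) :
  0 < a <= 1 -> filter_le (at_left a) (within (fun y => 0 <= y <= 1) (locally a)).
Proof.
  intros Ha P HP.
  assert (Hpos : locally a (fun y => 0 < y))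
    by (apply (locally_interval _ a 0 p_infty); simpl; auto; lra).
  unfold within in HP; unfold at_left, within.
  generalize (filter_and _ _ HP Hpos); apply filter_imp.
  intros y [Hy H0] Hya; apply Hy; lra.
Qed.

Lemma at_left_interval (P : R -> Prop) (l a : R) :
  l < a -> (forall r, l < r < a -> P r) -> at_left a P.
Proof.
  intros Hla HP.
  apply (locally_interval _ a l p_infty); [exact Hla | exact I |].
  intros r Hl _ Hra; apply HP; simpl in Hl; lra.
Qed.

Lemma left_limit_eq (f g : R -> R) (a : R) :
  filterlim f (at_left a) (locally (f a)) -> filterlim g (at_left a) (locally (g a)) ->
  at_left a (fun r => f r = g r) -> f a = g a.
Proof.
  intros Hf Hg Heq.
  apply (filterlim_locally_unique (F := at_left a) g); [| exact Hg].
  exact (filterlim_ext_loc f g Heq Hf).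
Qed.

Theorem proposition4p4
  (U Up Upp : R -> R)
  (* U in C([0,1]) *)
  (HUc : forall x, 0 <= x <= 1 ->
     filterlim U (within (fun y => 0 <= y <= 1) (locally x)) (locally (U x)))
  (* U in C^1((0,1]) with derivative Up (one-sided at 1) *)
  (HU1 : forall x, 0 < x < 1 -> is_derive U x (Up x))
  (HU1l : filterlim (fun x => (U x - U 1) / (x - 1)) (at_left 1) (locally (Up 1)))
  (HUpc : forall x, 0 < x <= 1 ->
     filterlim Up (within (fun y => 0 < y <= 1) (locally x)) (locally (Up x)))
  (* U in C^2((0,1)) with second derivative Upp *)
  (HU2 : forall x, 0 < x < 1 -> is_derive Up x (Upp x))
  (HUppc : forall x, 0 < x < 1 -> continuous Upp x)
  (* U'' > 0 on (0,1) *)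
  (HUpp_pos : forall x, 0 < x < 1 -> 0 < Upp x)
  (* lim_{h -> 0+} U'(h) = -oo *)
  (HUp0 : filterlim Up (at_right 0) (Rbar_locally m_infty))
  (* r |-> r U''(r) non-decreasing on (0,1) *)
  (Hmono : forall r s, 0 < r -> r <= s -> s < 1 -> r * Upp r <= s * Upp s)
  (at_ a : R) (Hat : 0 < at_) (Hata : at_ < a) (Ha1 : a <= 1)
  (K : nat) (HK : (3 <= K)%nat)
  (Hkappa : exists kappa : R, 0 < kappa /\
     forall z w : nat -> R, simplex K z -> simplex K w ->
       DU U Up K at_ z w = Rbar_mult (Finite kappa) (DU U Up K a z w)) :
  exists mu0 mu1 lambda : R, 0 < lambda /\
    forall r, 0 < r <= a -> U r = lambda * r * ln r + mu1 * r + mu0.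
Proof.
  destruct Hkappa as [kappa [Hkappa Hscale]].
  assert (Hq : 0 < at_ / a < 1) by (apply Rdiv_in_unit; lra).
  assert (Hcurv := scaling_curvature U Up Upp HU1 HU2 K at_ a kappa HK ltac:(lra) ltac:(lra) Hscale).
  assert (Hc : kappa * a / at_ = 1).
  { apply (scaling_ratio_eq_1 Up Upp HU2 HUpp_pos Hmono HUp0 (at_ / a) _ a Hq); auto; try lra.
    apply Rdiv_lt_0_compat; nra. }
  rewrite Hc in Hcurv.
  set (lam := a / 2 * Upp (a / 2)).
  assert (Hlam : forall s, 0 < s < a -> s * Upp s = lam).
  { intros s Hs; apply (curvature_const Upp Hmono (at_ / a) a Hq); try lra.
    intros u Hu; rewrite Hcurv by exact Hu; ring. }
  destruct (log_profile U Up Upp HU1 HU2 a lam ltac:(lra) Hlam) as [mu1 [mu0 Hlog]].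
  exists mu0, mu1, lam; split.
  { apply Rmult_lt_0_compat; [lra | apply HUpp_pos; lra]. }
  intros r Hr; destruct (Rlt_dec r a) as [Hra | Hra]; [apply Hlog; lra |].
  replace r with a by lra.
  apply (left_limit_eq U (fun r => lam * r * ln r + mu1 * r + mu0)).
  - apply (filterlim_filter_le_1 _ (at_left_le_within_unit a ltac:(lra))), HUc; lra.
  - apply (filterlim_filter_le_1 (F := locally a) _ (filter_le_within _)).
    apply (ex_derive_continuous (K := R_AbsRing) (V := R_NormedModule)
      (fun r => lam * r * ln r + mu1 * r + mu0) a); auto_derive; lra.
  - apply (at_left_interval _ 0 a); [lra | exact Hlog].
Qed.
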